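(* Let $G$ be a group with a finite generating set $S$, equipped with the word metric $d_S$, and suppose $G$ acts transitively by isometries on a metric space $M$. Fix a basepoint $x_0 \in M$. Suppose that $M$ has asymptotic property C and that there is an integer $n \ge 0$ such that for every $R > 0$, the quasi-stabilizer $W_R(x_0)$ (with the metric restricted from $d_S$) has asymptotic dimension at most $n$. Then $G$ (with the metric $d_S$) has straight finite decomposition complexity.
   Context: The word metric on $G$ with respect to the finite generating set $S$ is $d_S(g,h) = $ the length of a shortest word in $S \cup S^{-1}$ representing $g^{-1}h$. A family $\mathcal{F}$ of subsets of a metric space $X$ is uniformly bounded if there is $R>0$ with $\mathrm{diam}(F) < R$ for all $F \in \mathcal{F}$; for $r>0$, $\mathcal{F}$ is $r$-disjoint if $d(F_1,F_2) > r$ for all distinct $F_1, F_2 \in \mathcal{F}$. A metric space $X$ has asymptotic dimension at most $n$ if for every $r>0$ there exist $n+1$ uniformly bounded, $r$-disjoint families $\mathcal{F}_0,\dots,\mathcal{F}_n$ of subsets of $X$ whose union covers $X$. A metric space $X$ has asymptotic property C if for every sequence of real numbers $0<r_0<r_1<\cdots$ there exist $m \in \mathbb{N}$ and uniformly bounded families $\mathcal{F}_0,\dots,\mathcal{F}_m$ of subsets of $X$ such that each $\mathcal{F}_i$ is $r_i$-disjoint and $\bigcup_{i=0}^m \mathcal{F}_i$ covers $X$. For a group $G$ acting by isometries on $M$, $x \in M$ and $R>0$, the $R$-quasi-stabilizer of $x$ is $W_R(x) = \{ g \in G \mid d_M(x, gx) \le R\}$. For metric families (families of metric spaces) $\mathcal{X},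 \mathcal{Y}$ and $r>0$, $\mathcal{X}$ is $r$-decomposable over $\mathcal{Y}$ if for each $X \in \mathcal{X}$ there exist $r$-disjoint families $\mathcal{U}, \mathcal{V}$ of subsets of $X$ (with the induced metrics) such that $\mathcal{U}\cup\mathcal{V}$ covers $X$ and $\mathcal{U}\cup\mathcal{V} \subseteq \mathcal{Y}$. A metric family $\mathcal{X}$ has straight finite decomposition complexity (sFDC) if for every sequence $0 \le r_1 \le r_2 \le \cdots$ of real numbers there exist $n \in \mathbb{N}$ and metric families $\mathcal{X} = \mathcal{X}_0, \mathcal{X}_1, \dots, \mathcal{X}_n$ such that for each $1 \le i \le n$, $\mathcal{X}_i$ is $r_i$-decomposable over $\mathcal{X}_{i-1}$, and $\mathcal{X}_n$ is uniformly bounded (there is a uniform bound on the diameters of its members). A single metric space $X$ has sFDC if the family $\{X\}$ does. *)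

From Stdlib Require Import Reals List ClassicalEpsilon.
Open Scope R_scope.

Definition is_metric {X : Type} (d : X -> X -> R) : Prop :=
  (forall x y, 0 <= d x y) /\
  (forall x y, d x y = 0 <-> x = y) /\
  (forall x y, d x y = d y x) /\
  (forall x y z, d x z <= d x y + d y z).

Definition family (X : Type) := (X -> Prop) -> Prop.

Definition diam_le {X : Type} (d : X -> X -> R) (F : X -> Prop) (B : R) : Prop :=
  forall x y, F x -> F y -> d x y <= B.

Definition unif_bounded {X : Type} (d : X -> X -> R) (Fam : family X) : Prop :=
  exists B, 0 < B /\ forall F, Fam F -> diam_le d F B.

(* r < d(F1,F2) = inf { d x y | x in F1, y in F2 } *)
Definition setdist_gt {X : Type} (d : X -> X -> R) (F1 F2 : X -> Prop) (r : R) : Prop :=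
  exists eps, 0 < eps /\ forall x y, F1 x -> F2 y -> r + eps <= d x y.

Definition same_set {X : Type} (A B : X -> Prop) : Prop := forall x, A x <-> B x.

Definition r_disjoint {X : Type} (d : X -> X -> R) (r : R) (Fam : family X) : Prop :=
  forall F1 F2, Fam F1 -> Fam F2 -> ~ same_set F1 F2 -> setdist_gt d F1 F2 r.

Definition family_in {X : Type} (A : X -> Prop) (Fam : family X) : Prop :=
  forall F, Fam F -> forall x, F x -> A x.

Definition covers_upto {X : Type} (A : X -> Prop) (n : nat) (Fams : nat -> family X) : Prop :=
  forall x, A x -> exists i F, (i <= n)%nat /\ Fams i F /\ F x.

Definition asdim_le {X : Type} (d : X -> X -> R) (A : X -> Prop) (n : nat) : Prop :=
  forall r, 0 < r ->
    exists Fams : nat -> family X,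
      (forall i, (i <= n)%nat ->
         family_in A (Fams i) /\ unif_bounded d (Fams i) /\ r_disjoint d r (Fams i)) /\
      covers_upto A n Fams.

Definition asymptotic_property_C {X : Type} (d : X -> X -> R) : Prop :=
  forall r : nat -> R, 0 < r 0%nat -> (forall i, r i < r (S i)) ->
    exists (m : nat) (Fams : nat -> family X),
      (forall i, (i <= m)%nat -> unif_bounded d (Fams i) /\ r_disjoint d (r i) (Fams i)) /\
      covers_upto (fun _ => True) m Fams.

Definition r_decomposable {X : Type} (d : X -> X -> R) (r : R) (Fam Fam' : family X) : Prop :=
  forall Y, Fam Y ->
    exists U V : family X,
      family_in Y U /\ family_in Y V /\
      r_disjoint d r U /\ r_disjoint d r V /\
      (forall y, Y y -> exists F, (U F \/ V F) /\ F y) /\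
      (forall F, U F \/ V F -> Fam' F).

(* The metric space (X,d) (i.e. the family {X}) has straight finite decomposition
   complexity. Sequence r_1 <= r_2 <= ... is r 1, r 2, ... (r 0 is unused). *)
Definition sFDC {X : Type} (d : X -> X -> R) : Prop :=
  forall r : nat -> R, 0 <= r 1%nat -> (forall i, (1 <= i)%nat -> r i <= r (S i)) ->
    exists (n : nat) (Xs : nat -> family X),
      (forall A, Xs 0%nat A <-> (forall x, A x)) /\
      (forall i, (1 <= i <= n)%nat -> r_decomposable d (r i) (Xs (i - 1)%nat) (Xs i)) /\
      unif_bounded d (Xs n).

Definition is_group {G : Type} (mul : G -> G -> G) (inv : G -> G) (e : G) : Prop :=
  (forall a b c, mul a (mul b c) = mul (mul a b) c) /\
  (forall a, mul e a = a /\ mul a e = a) /\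
  (forall a, mul (inv a) a = e /\ mul a (inv a) = e).

(* a word in S ∪ S^{-1}: letters (b, s) with s in S; b = true means s, false means s^{-1} *)
Definition is_word {G : Type} (S : list G) (w : list (bool * G)) : Prop :=
  forall l, In l w -> In (snd l) S.

Definition word_eval {G : Type} (mul : G -> G -> G) (inv : G -> G) (e : G)
  (w : list (bool * G)) : G :=
  fold_right (fun (l : bool * G) (acc : G) => mul (if fst l then snd l else inv (snd l)) acc) e w.

Definition represents {G : Type} (mul : G -> G -> G) (inv : G -> G) (e : G)
  (S : list G) (n : nat) (g : G) : Prop :=
  exists w, is_word S w /\ length w = n /\ word_eval mul inv e w = g.

Definition generates {G : Type} (mul : G -> G -> G) (inv : G -> G) (e : G)
  (S : list G) : Prop :=
  forall g, exists n, represents mul inv e S n g.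

(* length of a shortest word in S ∪ S^{-1} representing g (well defined when S generates) *)
Definition word_length {G : Type} (mul : G -> G -> G) (inv : G -> G) (e : G)
  (S : list G) (g : G) : nat :=
  epsilon (inhabits 0%nat)
    (fun n => represents mul inv e S n g /\
              forall m, represents mul inv e S m g -> (n <= m)%nat).

Definition word_metric {G : Type} (mul : G -> G -> G) (inv : G -> G) (e : G)
  (S : list G) (g h : G) : R :=
  INR (word_length mul inv e S (mul (inv g) h)).

Definition is_isometric_action {G M : Type} (mul : G -> G -> G) (e : G)
  (dM : M -> M -> R) (act : G -> M -> M) : Prop :=
  (forall x, act e x = x) /\
  (forall g h x, act (mul g h) x = act g (act h x)) /\
  (forall g x y, dM (act g x) (act g y) = dM x y).

Definition transitive_action {G M : Type} (act : G -> M -> M) : Prop :=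
  forall x y, exists g, act g x = y.

Definition quasi_stab {G M : Type} (dM : M -> M -> R) (act : G -> M -> M)
  (x : M) (Rad : R) : G -> Prop :=
  fun g => dM x (act g x) <= Rad.

(* The orbit map g |-> g x0 is Lipschitz for the word metric, so pulling back the
   uniformly bounded families that witness property C of M gives finitely many
   decomposition steps: at each step one family is peeled off, and afterwards every piece
   has an orbit image of diameter at most B, i.e. lies in a translate g W_B(x0).
   Translations are isometries of d_S and W_B(x0) has asymptotic dimension at most n,
   so n + 1 further peelings by the translated families of W_B(x0), chosen disjoint at a
   radius exceeding all the remaining r_i, leave uniformly bounded pieces. *)

From Stdlib Require Import Reals List Lra Lia Classical ClassicalEpsilon Wf_nat.
Open Scope R_scope.

Definition included {X : Type} (A B : X -> Prop) : Prop := forall x, A x -> B x.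

Definition preimages {X Y : Type} (f : X -> Y) (C : family Y) : family X :=
  fun A => exists F, C F /\ A = (fun x => F (f x)).

Section MetricFamilies.
Context {X : Type} (d : X -> X -> R).

Lemma r_disjoint_le (r r' : R) (C : family X) :
  r <= r' -> r_disjoint d r' C -> r_disjoint d r C.
Proof.
  intros Hr HC F1 F2 H1 H2 Hne.
  destruct (HC F1 F2 H1 H2 Hne) as [eps [He Hd]].
  exists eps; split; [exact He|]. intros x y Hx Hy. specialize (Hd x y Hx Hy). lra.
Qed.

Lemma unif_bounded_upto (n : nat) (C : nat -> family X) :
  (forall i, (i <= n)%nat -> unif_bounded d (C i)) ->
  exists B, 0 < B /\ forall i F, (i <= n)%nat -> C i F -> diam_le d F B.
Proof.
  induction n as [|n IH]; intros HC.
  - destruct (HC 0%nat (le_n 0)) as [B [HB HF]].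
    exists B; split; [exact HB|]. intros i F Hi. replace i with 0%nat by lia. exact (HF F).
  - destruct IH as [B1 [HB1 HF1]]; [intros i Hi; apply HC; lia|].
    destruct (HC (S n) (le_n _)) as [B2 [HB2 HF2]].
    exists (Rmax B1 B2). split; [apply (Rlt_le_trans _ _ _ HB1), Rmax_l|].
    intros i F Hi HF x y Hx Hy. destruct (Nat.eq_dec i (S n)) as [->|Hne].
    + apply (Rle_trans _ B2); [exact (HF2 F HF x y Hx Hy)| apply Rmax_r].
    + apply (Rle_trans _ B1); [exact (HF1 i F ltac:(lia) HF x y Hx Hy)| apply Rmax_l].
Qed.

Definition decomposes (r : R) (Y : X -> Prop) (T : family X) : Prop :=
  exists U V : family X,
    family_in Y U /\ family_in Y V /\ r_disjoint d r U /\ r_disjoint d r V /\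
    (forall y, Y y -> exists F, (U F \/ V F) /\ F y) /\
    (forall F, U F \/ V F -> T F).

Lemma decomposes_weaken (r : R) (Y : X -> Prop) (T T' : family X) :
  (forall Z, T Z -> T' Z) -> decomposes r Y T -> decomposes r Y T'.
Proof.
  intros HT [U [V [HU [HV [HdU [HdV [Hcov HUV]]]]]]].
  exists U, V. repeat split; auto.
Qed.

(* An [r]-disjoint family [C] splits [Y] into the traces [Y ∩ F] and the remainder
   [Y \ ⋃ C]: the traces inherit [r]-disjointness and the remainder is alone in its family. *)
Lemma decomposes_by_traces (r : R) (C : family X) (Y : X -> Prop) (T : family X) :
  r_disjoint d r C ->
  (forall F, C F -> T (fun x => Y x /\ F x)) ->
  T (fun x => Y x /\ forall F, C F -> ~ F x) ->
  decomposes r Y T.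
Proof.
  intros HC HU HV.
  exists (fun Z => exists F, C F /\ Z = (fun x => Y x /\ F x)).
  exists (fun Z => Z = (fun x => Y x /\ forall F, C F -> ~ F x)).
  split; [|split; [|split; [|split; [|split]]]].
  - intros Z [F [HF ->]] x [Hx _]; exact Hx.
  - intros Z -> x [Hx _]; exact Hx.
  - intros Z1 Z2 [F1 [HF1 ->]] [F2 [HF2 ->]] Hne.
    assert (Hne' : ~ same_set F1 F2).
    { intros Hs; apply Hne; intros x; specialize (Hs x); tauto. }
    destruct (HC F1 F2 HF1 HF2 Hne') as [eps [He Hd]].
    exists eps; split; [exact He|]. intros x y [_ Hx] [_ Hy]; exact (Hd x y Hx Hy).
  - intros Z1 Z2 -> -> Hne. exfalso; apply Hne; intros x; tauto.
  - intros y Hy. destruct (classic (exists F, C F /\ F y)) as [[F [HF Fy]]|Hno].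
    + exists (fun x => Y x /\ F x). split; [left; exists F; auto|auto].
    + exists (fun x => Y x /\ forall F, C F -> ~ F x). split; [right; reflexivity|].
      split; [exact Hy|]. intros F HF Fy; apply Hno; eauto.
  - intros Z [[F [HF ->]] | ->]; auto.
Qed.

Definition peeled (C : nat -> family X) (k : nat) (Y : X -> Prop) : Prop :=
  (exists i F, (i < k)%nat /\ C i F /\ included Y F) \/
  (forall i F, (i < k)%nat -> C i F -> forall x, Y x -> ~ F x).

Lemma peeled_0 (C : nat -> family X) (Y : X -> Prop) : peeled C 0 Y.
Proof. right. intros i F Hi. lia. Qed.

Lemma peeled_decomposes (r : R) (C : nat -> family X) (k : nat) (Y : X -> Prop) :
  r_disjoint d r (C k) -> peeled C k Y ->
  decomposes r Y (fun Z => included Z Y /\ peeled C (S k) Z).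
Proof.
  intros HC HY. apply (decomposes_by_traces r (C k)); [exact HC| |].
  - intros F HF. split; [intros x [Hx _]; exact Hx|].
    destruct HY as [[i [F' [Hi [HF' HYF']]]] | _].
    + left. exists i, F'. repeat split; [lia|exact HF'|]. intros x [Hx _]; exact (HYF' x Hx).
    + left. exists k, F. repeat split; [lia|exact HF|]. intros x [_ Hx]; exact Hx.
  - split; [intros x [Hx _]; exact Hx|].
    destruct HY as [[i [F' [Hi [HF' HYF']]]] | HY].
    + left. exists i, F'. repeat split; [lia|exact HF'|]. intros x [Hx _]; exact (HYF' x Hx).
    + right. intros i F Hi HF x [Hx Hout] Fx.
      destruct (Nat.eq_dec i k) as [->|Hne].
      * exact (Hout F HF Fx).
      * exact (HY i F ltac:(lia) HF x Hx Fx).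
Qed.

Lemma peeled_r_decomposable (r : R) (C : nat -> family X) (k : nat) :
  r_disjoint d r (C k) -> r_decomposable d r (peeled C k) (peeled C (S k)).
Proof.
  intros HC Y HY. apply (decomposes_weaken r Y (fun Z => included Z Y /\ peeled C (S k) Z)).
  - intros Z HZ; exact (proj2 HZ).
  - exact (peeled_decomposes r C k Y HC HY).
Qed.

Lemma peeled_covered (A Y : X -> Prop) (n : nat) (C : nat -> family X) :
  covers_upto A n C -> included Y A -> peeled C (S n) Y ->
  (exists i F, (i <= n)%nat /\ C i F /\ included Y F) \/ (forall x, ~ Y x).
Proof.
  intros Hcov HYA [[i [F [Hi [HF HYF]]]] | Hout].
  - left. exists i, F. repeat split; [lia|exact HF|exact HYF].
  - right. intros x Hx. destruct (Hcov x (HYA x Hx)) as [i [F [Hi [HF Fx]]]].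
    exact (Hout i F ltac:(lia) HF x Hx Fx).
Qed.

End MetricFamilies.

Section Preimages.
Context {X Y : Type} (dX : X -> X -> R) (dY : Y -> Y -> R) (f : X -> Y).

Lemma r_disjoint_preimages (L r : R) (C : family Y) :
  0 < L -> (forall x y, dY (f x) (f y) <= L * dX x y) ->
  r_disjoint dY (L * r) C -> r_disjoint dX r (preimages f C).
Proof.
  intros HL Hlip HC A1 A2 [F1 [HF1 ->]] [F2 [HF2 ->]] Hne.
  assert (Hne' : ~ same_set F1 F2) by (intros Hs; apply Hne; intros x; apply Hs).
  destruct (HC F1 F2 HF1 HF2 Hne') as [eps [He Hd]].
  exists (eps / L). split; [apply Rdiv_lt_0_compat; assumption|].
  intros x y Hx Hy. apply (Rmult_le_reg_l L); [exact HL|].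
  replace (L * (r + eps / L)) with (L * r + eps) by (field; lra).
  specialize (Hd _ _ Hx Hy). specialize (Hlip x y). lra.
Qed.

Lemma diam_le_preimage (F : Y -> Prop) (D : R) :
  (forall x y, dX x y <= dY (f x) (f y)) -> diam_le dY F D -> diam_le dX (fun x => F (f x)) D.
Proof. intros Hf HF x y Hx Hy. exact (Rle_trans _ _ _ (Hf x y) (HF _ _ Hx Hy)). Qed.

Lemma covers_upto_preimages (A : Y -> Prop) (n : nat) (C : nat -> family Y) :
  covers_upto A n C -> covers_upto (fun x => A (f x)) n (fun i => preimages f (C i)).
Proof.
  intros Hcov x Hx. destruct (Hcov (f x) Hx) as [i [F [Hi [HF Fx]]]].
  exists i, (fun x => F (f x)). repeat split; [exact Hi| exists F; auto | exact Fx].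
Qed.

End Preimages.

Definition concat_levels {X : Type} (P Q : nat -> family X) (m : nat) : nat -> family X :=
  fun k => if (k <=? m)%nat then P k else Q (k - m)%nat.

Lemma concat_levels_le {X : Type} (P Q : nat -> family X) (m k : nat) :
  (k <= m)%nat -> concat_levels P Q m k = P k.
Proof. intros Hk. unfold concat_levels. rewrite (proj2 (Nat.leb_le k m) Hk). reflexivity. Qed.

Lemma concat_levels_gt {X : Type} (P Q : nat -> family X) (m k : nat) :
  (m < k)%nat -> concat_levels P Q m k = Q (k - m)%nat.
Proof. intros Hk. unfold concat_levels. rewrite (proj2 (Nat.leb_gt k m) Hk). reflexivity. Qed.

Lemma concat_levels_r_decomposable {X : Type} (d : X -> X -> R) (r : nat -> R)
  (P Q : nat -> family X) (m N : nat) :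
  (forall k, (k < m)%nat -> r_decomposable d (r (S k)) (P k) (P (S k))) ->
  (forall Z, P m Z -> Q 0%nat Z) ->
  (forall j, (m + j < N)%nat -> r_decomposable d (r (S (m + j))) (Q j) (Q (S j))) ->
  forall k, (k < N)%nat ->
    r_decomposable d (r (S k)) (concat_levels P Q m k) (concat_levels P Q m (S k)).
Proof.
  intros HP HPQ HQ k Hk.
  destruct (Nat.lt_trichotomy k m) as [Hkm|[->|Hkm]].
  - rewrite !concat_levels_le by lia. apply HP, Hkm.
  - rewrite concat_levels_le, concat_levels_gt, Nat.sub_succ_l, Nat.sub_diag by lia.
    specialize (HQ 0%nat ltac:(lia)). rewrite Nat.add_0_r in HQ.
    intros Y HY. exact (HQ Y (HPQ Y HY)).
  - rewrite !concat_levels_gt by lia.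
    replace (S k - m)%nat with (S (k - m)) by lia.
    replace (r (S k)) with (r (S (m + (k - m)))) by (f_equal; lia).
    apply HQ. lia.
Qed.

Lemma sFDC_intro {X : Type} (d : X -> X -> R) :
  (forall r : nat -> R, 0 <= r 1%nat -> (forall i, (1 <= i)%nat -> r i <= r (S i)) ->
     exists (N : nat) (Xs : nat -> family X),
       (forall A, (forall x, A x) -> Xs 0%nat A) /\
       (forall k, (k < N)%nat -> r_decomposable d (r (S k)) (Xs k) (Xs (S k))) /\
       unif_bounded d (Xs N)) ->
  sFDC d.
Proof.
  intros H r Hr1 Hr. destruct (H r Hr1 Hr) as [N [Xs [H0 [Hstep [B [HB HXsB]]]]]].
  exists N, (fun k => match k with 0%nat => fun A => forall x, A x | S _ => Xs k end).
  split; [|split].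
  - intros A; reflexivity.
  - intros [|k] Hi; [lia|]. rewrite Nat.sub_succ, Nat.sub_0_r.
    intros Y HY. apply (Hstep k); [lia|]. destruct k; [exact (H0 Y HY)|exact HY].
  - exists B. split; [exact HB|]. destruct N; [intros F HF; exact (HXsB F (H0 F HF))|exact HXsB].
Qed.

(* Property C asks for strictly increasing radii; adding [i + 1] makes [L * r (i + 1)] so. *)
Lemma asymptotic_property_C_radii {X : Type} (d : X -> X -> R) (L : R) (r : nat -> R) :
  asymptotic_property_C d -> 0 < L -> 0 <= r 1%nat ->
  (forall i, (1 <= i)%nat -> r i <= r (S i)) ->
  exists (m : nat) (C : nat -> family X),
    (forall i, (i <= m)%nat -> unif_bounded d (C i) /\ r_disjoint d (L * r (S i)) (C i)) /\
    covers_upto (fun _ => True) m C.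
Proof.
  intros HC HL Hr1 Hr.
  destruct (HC (fun i => L * r (S i) + INR (S i))) as [m [C [HCi Hcov]]].
  - simpl INR. pose proof (Rmult_le_pos L (r 1%nat) (Rlt_le _ _ HL) Hr1). lra.
  - intros i. rewrite (S_INR (S i)).
    pose proof (Rmult_le_compat_l L _ _ (Rlt_le _ _ HL) (Hr (S i) ltac:(lia))). lra.
  - exists m, C. split; [|exact Hcov]. intros i Hi. destruct (HCi i Hi) as [Hb Hdisj].
    split; [exact Hb|]. apply (r_disjoint_le d _ (L * r (S i) + INR (S i))); [|exact Hdisj].
    pose proof (pos_INR (S i)). lra.
Qed.

Lemma list_upper_bound {T : Type} (f : T -> R) (l : list T) :
  exists L, 0 < L /\ forall s, In s l -> f s <= L.
Proof.
  induction l as [|a l [L [HL Hl]]].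
  - exists 1. split; [lra|]. intros s [].
  - exists (Rmax (f a) L). split; [apply (Rlt_le_trans _ _ _ HL), Rmax_r|].
    intros s [<-|Hs]; [apply Rmax_l|apply (Rle_trans _ _ _ (Hl s Hs)), Rmax_r].
Qed.

Lemma radius_le (r : nat -> R) :
  (forall i, (1 <= i)%nat -> r i <= r (S i)) -> forall i j, (1 <= i <= j)%nat -> r i <= r j.
Proof.
  intros Hr i j [Hi Hij]. induction Hij as [|j Hij IH]; [lra|].
  apply (Rle_trans _ _ _ IH), Hr. lia.
Qed.

Section WordMetric.
Variables (G : Type) (mul : G -> G -> G) (inv : G -> G) (e : G) (gens : list G).
Hypothesis HG : is_group mul inv e.
Local Notation dG := (word_metric mul inv e gens).

Lemma inv_unique_l (a b : G) : mul a b = e -> a = inv b.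
Proof.
  destruct HG as [Hassoc [Hid Hinv]]. intros Hab.
  rewrite <- (proj2 (Hid a)), <- (proj2 (Hinv b)), Hassoc, Hab. apply Hid.
Qed.

Lemma inv_mul (a b : G) : inv (mul a b) = mul (inv b) (inv a).
Proof.
  destruct HG as [Hassoc [Hid Hinv]]. symmetry. apply inv_unique_l.
  rewrite <- Hassoc, (Hassoc (inv a) a b), (proj1 (Hinv a)), (proj1 (Hid b)).
  apply Hinv.
Qed.

Lemma word_metric_mul_l (g a b : G) : dG (mul g a) (mul g b) = dG a b.
Proof.
  unfold word_metric. rewrite inv_mul.
  destruct HG as [Hassoc [Hid Hinv]].
  rewrite <- Hassoc, (Hassoc (inv g) g b), (proj1 (Hinv g)), (proj1 (Hid b)). reflexivity.
Qed.

Lemma word_length_spec (g : G) :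
  generates mul inv e gens -> represents mul inv e gens (word_length mul inv e gens g) g.
Proof.
  intros Hgen. unfold word_length.
  apply (epsilon_spec (inhabits 0%nat)
    (fun n => represents mul inv e gens n g /\
              forall m, represents mul inv e gens m g -> (n <= m)%nat)).
  destruct (dec_inh_nat_subset_has_unique_least_element (fun n => represents mul inv e gens n g))
    as [n [[Hn Hmin] _]]; [intros n; apply classic|apply Hgen|].
  exists n. split; [exact Hn|exact Hmin].
Qed.

Section OrbitMap.
Variables (M : Type) (dM : M -> M -> R) (act : G -> M -> M) (x0 : M).
Hypothesis HM : is_metric dM.
Hypothesis Hact : is_isometric_action mul e dM act.

Lemma orbit_dist (g h : G) : dM (act g x0) (act h x0) = dM x0 (act (mul (inv g) h) x0).
Proof.
  destruct Hact as [Hact1 [Hactmul Hiso]].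
  rewrite <- (Hiso (inv g)), <- !Hactmul, (proj1 (proj2 (proj2 HG) g)), Hact1.
  reflexivity.
Qed.

Lemma displacement_inv (g : G) : dM x0 (act (inv g) x0) = dM x0 (act g x0).
Proof.
  destruct HM as [_ [_ [Hsym _]]].
  rewrite <- (proj2 (proj1 (proj2 HG) (inv g))), <- orbit_dist, (proj1 Hact). apply Hsym.
Qed.

Lemma displacement_mul (g h : G) :
  dM x0 (act (mul g h) x0) <= dM x0 (act g x0) + dM x0 (act h x0).
Proof.
  destruct HM as [_ [_ [_ Htri]]]. destruct Hact as [_ [Hactmul Hiso]].
  rewrite Hactmul, <- (Hiso g x0 (act h x0)). apply Htri.
Qed.

Lemma displacement_word_eval (L : R) (w : list (bool * G)) :
  (forall s, In s gens -> dM x0 (act s x0) <= L) -> is_word gens w ->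
  dM x0 (act (word_eval mul inv e w) x0) <= L * INR (length w).
Proof.
  intros HL. induction w as [|[b s] w IH]; intros Hw.
  - simpl. rewrite (proj1 Hact), (proj2 (proj1 (proj2 HM) x0 x0) eq_refl). lra.
  - assert (Hs : dM x0 (act (if b then s else inv s) x0) <= L).
    { specialize (HL s (Hw (b, s) (or_introl eq_refl))).
      destruct b; [exact HL|rewrite displacement_inv; exact HL]. }
    assert (Hrest := IH (fun l Hl => Hw l (or_intror Hl))).
    cbn [word_eval fold_right fst snd length]. fold (word_eval mul inv e w).
    rewrite S_INR. pose proof (displacement_mul (if b then s else inv s) (word_eval mul inv e w)).
    lra.
Qed.

Lemma orbit_map_lipschitz :
  generates mul inv e gens ->
  exists L, 0 < L /\ forall g h, dM (act g x0) (act h x0) <= L * dG g h.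
Proof.
  intros Hgen. destruct (list_upper_bound (fun s => dM x0 (act s x0)) gens) as [L [HL HLs]].
  exists L. split; [exact HL|]. intros g h. rewrite orbit_dist.
  destruct (word_length_spec (mul (inv g) h) Hgen) as [w [Hw [Hlen Hev]]].
  unfold word_metric. rewrite <- Hlen, <- Hev at 1. exact (displacement_word_eval L w HLs Hw).
Qed.

Lemma included_translate_quasi_stab (B : R) (Z : G -> Prop) :
  (forall g h, Z g -> Z h -> dM (act g x0) (act h x0) <= B) ->
  exists g, included Z (fun h => quasi_stab dM act x0 B (mul (inv g) h)).
Proof.
  intros HZ. destruct (classic (exists g, Z g)) as [[g Hg]|Hempty].
  - exists g. intros h Hh. unfold quasi_stab. rewrite <- orbit_dist. exact (HZ g h Hg Hh).
  - exists e. intros h Hh. exfalso. apply Hempty. exists h; exact Hh.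
Qed.

Lemma peeled_orbit_in_translate_quasi_stab (m : nat) (Fc : nat -> family M) (B : R)
  (Z : G -> Prop) :
  covers_upto (fun _ => True) m Fc ->
  (forall i F, (i <= m)%nat -> Fc i F -> diam_le dM F B) ->
  peeled (fun i => preimages (fun g => act g x0) (Fc i)) (S m) Z ->
  exists g, included Z (fun h => quasi_stab dM act x0 B (mul (inv g) h)).
Proof.
  intros Hcov HB HZ. apply included_translate_quasi_stab. intros g h Hg Hh.
  destruct (peeled_covered (fun _ => True) Z m _
              (covers_upto_preimages (fun g => act g x0) _ m Fc Hcov) (fun _ _ => I) HZ)
    as [[i [A [Hi [[F [HF ->]] HZF]]]] | Hempty].
  - exact (HB i F Hi HF _ _ (HZF g Hg) (HZF h Hh)).
  - exfalso. exact (Hempty g Hg).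
Qed.

End OrbitMap.

Section Translates.
Variables (W : G -> Prop) (n : nat) (Fams : nat -> family G) (rad D : R).
Hypothesis Hdisj : forall i, (i <= n)%nat -> r_disjoint dG rad (Fams i).
Hypothesis Hdiam : forall i F, (i <= n)%nat -> Fams i F -> diam_le dG F D.
Hypothesis Hcov : covers_upto W n Fams.

Definition peeled_in_translate (j : nat) (Z : G -> Prop) : Prop :=
  exists g, included Z (fun h => W (mul (inv g) h)) /\
            peeled (fun i => preimages (mul (inv g)) (Fams i)) j Z.

Lemma peeled_in_translate_r_decomposable (j : nat) (r : R) :
  (j <= n)%nat -> r <= rad ->
  r_decomposable dG r (peeled_in_translate j) (peeled_in_translate (S j)).
Proof.
  intros Hj Hr Y [g [HYW HY]].
  assert (Hdisj_g : r_disjoint dG r (preimages (mul (inv g)) (Fams j))).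
  { apply (r_disjoint_preimages dG dG _ 1); [lra| |].
    - intros a b. rewrite word_metric_mul_l. lra.
    - apply (r_disjoint_le dG _ rad); [lra|exact (Hdisj j Hj)]. }
  apply (decomposes_weaken dG r Y (fun Z => included Z Y /\
           peeled (fun i => preimages (mul (inv g)) (Fams i)) (S j) Z)).
  - intros Z [HZY HZ]. exists g. split; [intros h Hh; exact (HYW h (HZY h Hh))|exact HZ].
  - exact (peeled_decomposes dG r _ j Y Hdisj_g HY).
Qed.

Lemma peeled_in_translate_diam (Z : G -> Prop) :
  peeled_in_translate (S n) Z -> diam_le dG Z D.
Proof.
  intros [g [HZW HZ]].
  destruct (peeled_covered _ Z n _ (covers_upto_preimages (mul (inv g)) W n Fams Hcov) HZW HZ)
    as [[i [A [Hi [[F [HF ->]] HZF]]]] | Hempty].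
  - intros a b Ha Hb.
    refine (diam_le_preimage dG dG (mul (inv g)) F D _ (Hdiam i F Hi HF) a b (HZF a Ha) (HZF b Hb)).
    intros x y. rewrite word_metric_mul_l. lra.
  - intros a b Ha. exfalso. exact (Hempty a Ha).
Qed.

End Translates.
End WordMetric.

Theorem mainTheorem2
  (G : Type) (mul : G -> G -> G) (inv : G -> G) (e : G)
  (HG : is_group mul inv e)
  (S : list G) (HS : generates mul inv e S)
  (M : Type) (dM : M -> M -> R) (HM : is_metric dM)
  (act : G -> M -> M)
  (Hact : is_isometric_action mul e dM act)
  (Htrans : transitive_action act)
  (x0 : M)
  (HC : asymptotic_property_C dM)
  (n : nat)
  (Hdim : forall Rad : R, 0 < Rad ->
            asdim_le (word_metric mul inv e S) (quasi_stab dM act x0 Rad) n) :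
  sFDC (word_metric mul inv e S).
Proof.
  rename S into gens.
  destruct (orbit_map_lipschitz G mul inv e gens HG M dM act x0 HM Hact HS) as [L [HL Lip]].
  apply sFDC_intro. intros r Hr1 Hr.
  destruct (asymptotic_property_C_radii dM L r HC HL Hr1 Hr) as [m [Fc [HFc Hcov]]].
  destruct (unif_bounded_upto dM m Fc (fun i Hi => proj1 (HFc i Hi))) as [B [HB HFcB]].
  set (N := (S m + S n)%nat).
  assert (HrN : forall k, (k < N)%nat -> r (S k) <= r N)
    by (intros; apply radius_le; [exact Hr|lia]).
  destruct (Hdim B HB (r N + 1)) as [Fams [HFams HcovW]].
  { pose proof (HrN 0%nat ltac:(lia)). lra. }
  destruct (unif_bounded_upto _ n Fams (fun i Hi => proj1 (proj2 (HFams i Hi))))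
    as [D [HD HFamsD]].
  set (P2 := peeled_in_translate G mul inv (quasi_stab dM act x0 B) Fams).
  exists N, (concat_levels (peeled (fun i => preimages (fun g => act g x0) (Fc i))) P2 (S m)).
  split; [|split].
  - intros A _. apply peeled_0.
  - apply concat_levels_r_decomposable.
    + intros k Hk. apply peeled_r_decomposable, (r_disjoint_preimages _ dM _ L _ _ HL Lip).
      apply HFc. lia.
    + intros Z HZ. destruct (peeled_orbit_in_translate_quasi_stab G mul inv e HG M dM act x0 Hact
                               m Fc B Z Hcov HFcB HZ) as [g Hg].
      exists g. split; [exact Hg|apply peeled_0].
    + intros j Hj.
      apply (peeled_in_translate_r_decomposable G mul inv e gens HG _ n Fams (r N + 1)).
      * intros i Hi. apply HFams, Hi.
      * lia.
      * pose proof (HrN (S m + j)%nat Hj). lra.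
  - exists D. split; [exact HD|].
    rewrite concat_levels_gt by lia. replace (N - S m)%nat with (S n) by lia.
    exact (peeled_in_translate_diam G mul inv e gens HG _ n Fams D HFamsD HcovW).
Qed.
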